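(* Let $F$ be a CNF formula over variables $X \cup Y \cup Z$ (pairwise disjoint), $X=\{x_1,\ldots,x_n\}$, such that for every truth assignment to $X \cup Y$ the values of the variables in $Z$ are obtained from it by unit propagation in $F$. Let $c_X(F) = \{\gamma \vee \neg a \vee \neg b \mid \gamma \in F\} \cup \{\neg x_i \vee v_i \mid 1\le i\le n\} \cup \{x_i \vee v_i \mid 1\le i\le n\} \cup \{\neg v_1 \vee \cdots \vee \neg v_n \vee a\} \cup \{\neg v_1 \vee \cdots \vee \neg v_n \vee b\}$, where $a,b,v_1,\ldots,v_n$ are new variables. Then, with branching allowed only on $X \cup Y$, $$ s(c_X(F)) = 2^n - 1 + \sum_{X'} s(F|X'), $$ where $X'$ ranges over all truth assignments to the variables of $X$ and $s(F|X')$ is computed with branching restricted to $Y$.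
   Context: A CNF formula is a finite set of clauses; the empty clause is unsatisfiable. For a partial assignment $I$ (set of literals), $F|I$ is obtained by deleting clauses containing a literal true under $I$ and deleting false literals from remaining clauses. $Var(F)$ is the set of variables of $F$. A binary tree is empty $()$ or a triple $(x~T_1~T_2)$; its size is its number of nodes. $U(F)$ denotes the result of exhaustive unit propagation on $F$. For a set $B$ of variables, a DPLL-Mono search tree (DMST) of $F$ with branching restricted to $B$ is: $()$ if $U(F)$ contains the empty clause; otherwise $(x~T_1~T_2)$ with $x \in B \cap Var(U(F))$, $T_1$ a DMST of $U(F|\{\neg x\})$ and $T_2$ a DMST of $U(F|\{x\})$ (branching restricted to $B$). $s(\cdot)$ denotes the minimum size of such a DMST, and $\infty$ if none exists. *)

From mathcomp Require Import all_boot.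
From Stdlib Require Import ClassicalEpsilon.

Set Implicit Arguments.
Unset Strict Implicit.
Unset Printing Implicit Defensive.

(* Variables are natural numbers; a literal (x, true) is x, (x, false) is ~x. *)
Definition literal := (nat * bool)%type.
Definition clause := seq literal.   (* read as the set of its literals *)
Definition cnf := seq clause.       (* read as the set of its clauses *)

Definition neg_lit (l : literal) : literal := (l.1, ~~ l.2).

Definition restrict (F : cnf) (I : seq literal) : cnf :=
  [seq [seq l <- c | neg_lit l \notin I] | c <- F & ~~ has (fun l => l \in I) c].

Definition var_in (F : cnf) (x : nat) : bool :=
  has (fun c => has (fun l : literal => l.1 == x) c) F.

Definition unit_lit (F : cnf) : option literal :=
  match [seq c <- F | size (undup c) == 1] with
  | c :: _ => ohead c
  | [::] => None
  end.

(* exhaustive unit propagation; each step removes at least the unit clause,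
   so size F steps suffice *)
Fixpoint up (fuel : nat) (F : cnf) : cnf :=
  if fuel is k.+1 then
    (if unit_lit F is Some l then up k (restrict F [:: l]) else F)
  else F.

Definition U (F : cnf) : cnf := up (size F) F.

Inductive tree := Leaf | Node of nat & tree & tree.

Fixpoint tsize (T : tree) : nat :=
  if T is Node _ T1 T2 then (tsize T1 + tsize T2).+1 else 0.

Inductive dmst (B : pred nat) : cnf -> tree -> Prop :=
| dmst_leaf F : [::] \in U F -> dmst B F Leaf
| dmst_node F x T1 T2 :
    [::] \notin U F -> B x -> var_in (U F) x ->
    dmst B (U (restrict (U F) [:: (x, false)])) T1 ->
    dmst B (U (restrict (U F) [:: (x, true)])) T2 ->
    dmst B F (Node x T1 T2).

Definition has_tree_of_size (B : pred nat) (F : cnf) (k : nat) : Prop :=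
  exists T, dmst B F T /\ tsize T = k.

Definition htos_b (B : pred nat) (F : cnf) (k : nat) : bool :=
  if excluded_middle_informative (has_tree_of_size B F k) then true else false.

Lemma htos_b_ex (B : pred nat) (F : cnf) :
  (exists k, has_tree_of_size B F k) -> exists k, htos_b B F k.
Proof.
case=> k Hk; exists k; rewrite /htos_b.
by case: excluded_middle_informative.
Qed.

(* s(F): minimum size of a DMST (None = infinity) *)
Definition s (B : pred nat) (F : cnf) : option nat :=
  match excluded_middle_informative (exists k, has_tree_of_size B F k) with
  | left H => Some (ex_minn (htos_b_ex H))
  | right _ => None
  end.

Definition oadd (a b : option nat) : option nat :=
  match a, b with Some x, Some y => Some (x + y) | _, _ => None end.

Definition cX (n : nat) (xs vs : n.-tuple nat) (a b : nat) (F : cnf) : cnf :=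
  [seq g ++ [:: (a, false); (b, false)] | g <- F]
  ++ [seq [:: (p.1, false); (p.2, true)] | p <- zip xs vs]
  ++ [seq [:: (p.1, true); (p.2, true)] | p <- zip xs vs]
  ++ [:: rcons [seq (v, false) | v <- vs] (a, true);
         rcons [seq (v, false) | v <- vs] (b, true)].

Definition assign_X (n : nat) (xs : n.-tuple nat) (f : {ffun 'I_n -> bool})
  : seq literal := [seq (tnth xs i, f i) | i : 'I_n].

Definition assign_on (vs : seq nat) (f : nat -> bool) : seq literal :=
  [seq (x, f x) | x <- vs].

(* As long as nothing is refuted from a consistent partial assignment I,
   unit propagation computes U(G|I) = G|J, where J is the set of literals
   derivable from I by unit resolution; this turns U into something one can
   reason about by induction.

   Under a total assignment X' to X, unit propagation in c_X(F)|X' derives every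
   v_i and then a and b, after which c_X(F) reduces exactly to F|X'.  Search
   trees of the two formulas therefore coincide, branching on X being useless
   once X is assigned.  Under a partial assignment leaving some x_i open, v_i is
   not derivable, hence neither are a and b: nothing is refuted, every clause of
   F stays blocked by ~a \/ ~b, and x_i still occurs.

   Upper bound: branch on all of X (2^n - 1 nodes) and hang a minimal tree for
   F|X' below each leaf X'.  Lower bound: a tree T for c_X(F) under a partial
   assignment with m open X-variables yields trees of sizes k_f for all 2^m
   completions f with 2^m - 1 + sum_f k_f <= |T|.  An X-node splits the
   completions; a Y-node must be replayed under each of the 2^m completions,
   and this is paid for by the term 2^m - 1 that both of its subtrees carry. *)

From Pilot Require Import Defs.
From mathcomp Require Import all_boot zify.
From Stdlib Require Import ClassicalEpsilon Classical.

Set Implicit Arguments.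
Unset Strict Implicit.
Unset Printing Implicit Defensive.

Implicit Types (G H : cnf) (c : clause) (l m : literal) (I J : seq literal).

(** * Restriction by partial assignments *)

Lemma neg_litK : involutive neg_lit.
Proof. by case=> x t; rewrite /neg_lit negbK. Qed.

Lemma neg_lit_neq l : neg_lit l != l.
Proof. by case: l => x []; rewrite /neg_lit xpair_eqE eqxx. Qed.

Definition consistent I := forall l, l \in I -> neg_lit l \notin I.

Lemma consistent_cat1 I l :
  consistent I -> l \notin I -> neg_lit l \notin I -> consistent (I ++ [:: l]).
Proof.
move=> cI lI nlI m; rewrite !mem_cat !inE => /orP[mI|/eqP ->].
  rewrite (negbTE (cI _ mI)) /=; apply: contraNneq nlI => <-.
  by rewrite neg_litK.
by rewrite (negbTE nlI) neg_lit_neq.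
Qed.

Lemma restrict_cons c G I :
  restrict (c :: G) I =
  if has (mem I) c then restrict G I
  else [seq l <- c | neg_lit l \notin I] :: restrict G I.
Proof. by rewrite /restrict /=; case: has. Qed.

Lemma restrict_cnf_cat G H I : restrict (G ++ H) I = restrict G I ++ restrict H I.
Proof. by rewrite /restrict filter_cat map_cat. Qed.

Lemma var_in_cons c G x :
  var_in (c :: G) x = has (fun l : literal => l.1 == x) c || var_in G x.
Proof. by []. Qed.

Lemma eq_restrict_on G I J :
  (forall l, var_in G l.1 -> (l \in I) = (l \in J)) -> restrict G I = restrict G J.
Proof.
elim: G => [|c G IH] // eIJ; rewrite !restrict_cons IH; last first.
  by move=> l vl; apply: eIJ; rewrite var_in_cons vl orbT.
have eIJc l : l \in c -> (l \in I) = (l \in J) /\ (neg_lit l \in I) = (neg_lit l \in J).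
  by move=> lc; split; apply: eIJ; rewrite var_in_cons; apply/orP; left; apply/hasP; exists l.
rewrite (eq_in_has (a2 := mem J)) => [|l /eIJc [] //].
by congr (if _ then _ else _ :: _); apply: eq_in_filter => l /eIJc [_ ->].
Qed.

Lemma eq_restrict G I J : I =i J -> restrict G I = restrict G J.
Proof. by move=> eIJ; apply: eq_restrict_on => l _; rewrite eIJ. Qed.

Lemma restrict_nil G : restrict G [::] = G.
Proof.
elim: G => [|c G IH] //; rewrite restrict_cons IH /= has_pred0.
by rewrite (@eq_filter _ _ predT) ?filter_predT.
Qed.

Lemma restrict_cat G I J :
  (forall l, l \in J -> neg_lit l \notin I) ->
  restrict (restrict G I) J = restrict G (I ++ J).
Proof.
move=> nJI; elim: G => [|c G IH] //.
have has_cat_IJ : has (mem (I ++ J)) c = has (mem I) c || has (mem J) c.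
  by rewrite -has_predU; apply: eq_has => l; rewrite /= mem_cat.
rewrite !restrict_cons has_cat_IJ; case: (has (mem I) c) => //.
rewrite restrict_cons IH /= -filter_predI.
have -> : has (mem J) [seq l <- c | neg_lit l \notin I] = has (mem J) c.
  apply/hasP/hasP => [[l]|[l lc lJ]]; first by rewrite mem_filter => /andP[_ lc]; exists l.
  by exists l; rewrite // mem_filter nJI.
by congr (if _ then _ else _ :: _); apply: eq_filter => l; rewrite /= mem_cat negb_or andbC.
Qed.

Lemma mem_restrictP G I c' :
  reflect (exists2 c, c \in G &
             ~~ has (mem I) c /\ c' = [seq l <- c | neg_lit l \notin I])
          (c' \in restrict G I).
Proof.
apply: (iffP mapP) => [[c]|[c cG [hc ->]]].
  by rewrite mem_filter => /andP[hc cG] ->; exists c.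
by exists c; rewrite // mem_filter hc.
Qed.

Lemma var_in_restrictP G I x :
  reflect (exists2 c, c \in G & ~~ has (mem I) c /\
              exists2 l, l \in c & l.1 = x /\ neg_lit l \notin I)
          (var_in (restrict G I) x).
Proof.
apply: (iffP hasP) => [[c'] /mem_restrictP [c cG [hc ->]] /hasP [l]|
                       [c cG [hc [l lc [lx nlI]]]]].
  by rewrite mem_filter => /andP[nlI lc] /eqP lx; exists c => //; split => //; exists l.
exists [seq l <- c | neg_lit l \notin I]; first by apply/mem_restrictP; exists c.
by apply/hasP; exists l; rewrite ?mem_filter ?nlI ?lx.
Qed.

Lemma var_in_restrict G I x : var_in (restrict G I) x -> var_in G x.
Proof.
case/var_in_restrictP => c cG [_ [l lc [lx _]]].
by apply/hasP; exists c => //; apply/hasP; exists l; rewrite ?lx.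
Qed.

Lemma var_in_restrict_assigned G I l : l \in I -> ~~ var_in (restrict G I) l.1.
Proof.
case: l => x t lI; apply/negP => /var_in_restrictP [c _ [hc [[y u] lc [/= yx]]]].
rewrite {}yx in lc *; case: (eqVneq u t) => [eut|nut].
  by move/hasP: hc; case; exists (x, u); rewrite // eut.
rewrite /neg_lit /= (_ : ~~ u = t) ?lI //.
by case: u t nut {lc lI} => [] [].
Qed.

Lemma restrict_novar G l : ~~ var_in G l.1 -> restrict G [:: l] = G.
Proof.
move=> nvl; rewrite -[RHS]restrict_nil; apply: eq_restrict_on => m vm.
by rewrite !inE; apply: contraNF nvl => /eqP <-.
Qed.

Lemma restrict_satisfied G I : (forall c, c \in G -> has (mem I) c) -> restrict G I = [::].
Proof.
move=> sat; rewrite /restrict (@eq_in_filter _ _ pred0) ?filter_pred0 // => c /sat.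
by move=> ->.
Qed.

Lemma restrict_catr_falsified G s I :
  (forall l, l \in s -> neg_lit l \in I /\ l \notin I) ->
  restrict [seq c ++ s | c <- G] I = restrict G I.
Proof.
move=> fals; elim: G => [|c G IH] //=; rewrite !restrict_cons IH has_cat.
have -> : has (mem I) s = false by apply/hasP => [[l /fals [_ /negP]]].
rewrite orbF filter_cat (@eq_in_filter _ _ pred0 s) ?filter_pred0 ?cats0 //.
by move=> l /fals [-> _].
Qed.

(** * Unit propagation and unit resolution *)

Lemma unit_litP G l : unit_lit G = Some l ->
  exists2 c, c \in G & l \in c /\ forall m, m \in c -> m = l.
Proof.
rewrite /unit_lit; case E: [seq c <- G | _] => [|c r] //.
have : c \in [seq c <- G | size (undup c) == 1] by rewrite E mem_head.
rewrite mem_filter => /andP[/eqP sz cG].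
case: c E sz cG => [|l0 c] // _ sz cG [<-]; exists (l0 :: c) => //; split => [|m mc].
  exact: mem_head.
have : {subset l0 :: c <= undup (l0 :: c)} by move=> k; rewrite mem_undup.
case: (undup (l0 :: c)) sz => [|u [|]] // _ /[dup] /(_ l0 (mem_head _ _)).
by rewrite !inE => /eqP <- /(_ m mc); rewrite inE => /eqP.
Qed.

Lemma unit_lit_None G c : unit_lit G = None -> c \in G -> size (undup c) != 1.
Proof.
rewrite /unit_lit => uN cG; apply/negP => sz1.
have : c \in [seq c <- G | size (undup c) == 1] by rewrite mem_filter sz1.
case E: [seq c <- G | _] uN => [|[|l c'] r] // _ _.
have : [::] \in [seq c <- G | size (undup c) == 1] by rewrite E mem_head.
by rewrite mem_filter.
Qed.

Lemma size_restrict_lt G c l : c \in G -> l \in c -> size (restrict G [:: l]) < size G.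
Proof.
move=> cG lc; rewrite size_map size_filter -(count_predC (fun c => ~~ has (mem [:: l]) c)).
rewrite -[X in X < _]addn0 ltn_add2l -has_count; apply/hasP; exists c => //=.
by rewrite negbK; apply/hasP; exists l; rewrite ?inE.
Qed.

Lemma unit_lit_up k G : size G <= k -> unit_lit (up k G) = None.
Proof.
elim: k G => [|k IH] G /=; first by rewrite leqn0 => /nilP ->.
case E: (unit_lit G) => [l|] // szG; apply: IH.
by case/unit_litP: E => c cG [lc _]; rewrite -ltnS (leq_trans (size_restrict_lt cG lc)).
Qed.

Lemma unit_lit_U G : unit_lit (U G) = None.
Proof. exact: unit_lit_up. Qed.

Lemma U_idem G : U (U G) = U G.
Proof. by rewrite {1}/U; case: size => //= k; rewrite unit_lit_U. Qed.

Lemma var_in_U G x : var_in (U G) x -> var_in G x.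
Proof.
rewrite /U; move: (size G) => k; elim: k G => [|k IH] G //=.
by case: unit_lit => [l /IH /var_in_restrict|].
Qed.

Inductive unit_derivable G I : literal -> Prop :=
| derivable_hyp l : l \in I -> unit_derivable G I l
| derivable_unit c l : c \in G -> l \in c ->
    (forall m, m \in c -> m != l -> unit_derivable G I (neg_lit m)) ->
    unit_derivable G I l.

Definition unit_refutable G I :=
  exists2 c, c \in G & forall l, l \in c -> unit_derivable G I (neg_lit l).

Lemma unit_derivable_min G I (S : literal -> Prop) :
  (forall l, l \in I -> S l) ->
  (forall c l, c \in G -> l \in c -> (forall m, m \in c -> m != l -> S (neg_lit m)) -> S l) ->
  forall l, unit_derivable G I l -> S l.
Proof. by move=> SI Sunit l; elim=> [m /SI|c m cG mc _]//; apply: Sunit. Qed.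

Lemma unit_derivable_trans G I J l :
  (forall m, m \in J -> unit_derivable G I m) -> unit_derivable G J l -> unit_derivable G I l.
Proof. by move=> DJ; apply: unit_derivable_min => // c m; apply: derivable_unit. Qed.

Lemma unit_derivable_sub G I J l :
  {subset I <= J} -> unit_derivable G I l -> unit_derivable G J l.
Proof. by move=> sIJ; apply: unit_derivable_trans => m /sIJ /derivable_hyp. Qed.

Lemma unit_derivable_var G I l : unit_derivable G I l -> l \in I \/ var_in G l.1.
Proof.
case=> [m|c m cG mc _]; [by left|right].
by apply/hasP; exists c => //; apply/hasP; exists m.
Qed.

Lemma up_restrict_closure G I A k :
  consistent (I ++ A) -> (forall l, l \in A -> unit_derivable G I l) ->
  exists A', [/\ up k (restrict G (I ++ A)) = restrict G (I ++ A'),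
                 consistent (I ++ A') & forall l, l \in A' -> unit_derivable G I l].
Proof.
elim: k A => [|k IH] A cIA DA; first by exists A.
rewrite /=; case E: unit_lit => [l|]; last by exists A.
case/unit_litP: E => c' /mem_restrictP [c cG [hc ->]] [lc' unit_c'].
move: lc'; rewrite mem_filter => /andP[nlIA lc].
have lIA : l \notin I ++ A by apply: contra hc => lIA; apply/hasP; exists l.
have Dl : unit_derivable G I l.
  apply: (derivable_unit cG lc) => m mc nml.
  case: (boolP (neg_lit m \in I ++ A)) => [|nmIA].
    by rewrite mem_cat => /orP[/derivable_hyp|/DA].
  by rewrite (unit_c' m) ?eqxx ?mem_filter ?nmIA in nml.
rewrite restrict_cat => [|m]; last by rewrite inE => /eqP ->.
have cIAl : consistent (I ++ (A ++ [:: l])) by rewrite catA; apply: consistent_cat1.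
have DAl m : m \in A ++ [:: l] -> unit_derivable G I m.
  by rewrite mem_cat inE => /orP[/DA|/eqP ->].
by have [A' [UGIA' *]] := IH _ cIAl DAl; exists A'; rewrite -catA.
Qed.

Lemma U_restrict_closure G I : consistent I ->
  exists J, [/\ U (restrict G I) = restrict G J, consistent J, {subset I <= J},
                (forall l, l \in J -> unit_derivable G I l) & unit_lit (restrict G J) = None].
Proof.
move=> cI; have cI0 : consistent (I ++ [::]) by rewrite cats0.
have [//|A' [UGI cIA' DA']] := @up_restrict_closure G I [::] (size (restrict G I)) cI0.
rewrite cats0 in UGI; exists (I ++ A'); split => //.
- by move=> l; rewrite mem_cat => ->.
- by move=> l; rewrite mem_cat => /orP[/derivable_hyp|/DA'].
- by rewrite -UGI unit_lit_U.
Qed.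

Lemma size_undup_const c l : l \in c -> (forall m, m \in c -> m = l) -> size (undup c) = 1.
Proof.
move=> lc cl; apply/eqP; rewrite eqn_leq; apply/andP; split.
  have -> : 1 = size [:: l] by [].
  by apply: uniq_leq_size (undup_uniq c) _ => m; rewrite mem_undup => /cl ->; rewrite inE.
by rewrite lt0n size_eq0; apply: contraTneq lc; rewrite -mem_undup => ->.
Qed.

Lemma unit_derivable_complete G I J l :
  consistent J -> {subset I <= J} -> unit_lit (restrict G J) = None ->
  [::] \notin restrict G J -> unit_derivable G I l -> l \in J.
Proof.
move=> cJ sIJ noUnit noEmpty; apply: (unit_derivable_min (S := fun k => k \in J)) sIJ _ l.
move=> c m cG mc IH.
apply/negPn/negP => mJ.
have hc : ~~ has (mem J) c.
  apply/hasP => [[k kc kJ]]; have nkm : k != m by apply: contraNneq mJ => <-.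
  by move: (IH k kc nkm); rewrite (negbTE (cJ _ kJ)).
have c'G : [seq k <- c | neg_lit k \notin J] \in restrict G J by apply/mem_restrictP; exists c.
have only_m k : k \in [seq k <- c | neg_lit k \notin J] -> k = m.
  by rewrite mem_filter => /andP[nkJ kc]; apply/eqP; apply: contraNT nkJ => /(IH k kc) ->.
case: (boolP (neg_lit m \in J)) => nmJ.
  suff E : [seq k <- c | neg_lit k \notin J] = [::] by rewrite E (negbTE noEmpty) in c'G.
  case E: [seq k <- c | _] only_m => [//|k s] /(_ k (mem_head k s)) km.
  by move: (mem_head k s); rewrite -E mem_filter km nmJ.
by move: (unit_lit_None noUnit c'G); rewrite (@size_undup_const _ m) // mem_filter nmJ.
Qed.

Lemma U_refutable G I : consistent I -> ([::] \in U (restrict G I) <-> unit_refutable G I).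
Proof.
move=> cI; have [J [-> cJ sIJ DJ noUnit]] := U_restrict_closure G cI; split.
  case/mem_restrictP => c cG [_ E]; exists c => // l lc; apply: DJ.
  apply: contraT => nlJ; have : l \in [seq k <- c | neg_lit k \notin J] by rewrite mem_filter nlJ.
  by rewrite -E.
case=> c cG Dc; apply/negPn/negP => noEmpty; apply: (negP noEmpty).
have inJ l : l \in c -> neg_lit l \in J.
  by move=> /Dc; apply: unit_derivable_complete.
apply/mem_restrictP; exists c => //; split.
  by apply/hasP => [[l /inJ nlJ lJ]]; move: (cJ _ lJ); rewrite nlJ.
apply/esym/nilP; rewrite /nilp size_filter -leqn0 leqNgt -has_count.
by apply/hasP => [[l /= /inJ ->]].
Qed.

Lemma U_restrict_derivable G I : consistent I -> ~ unit_refutable G I ->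
  exists J, [/\ U (restrict G I) = restrict G J, consistent J &
                forall l, l \in J <-> unit_derivable G I l].
Proof.
move=> cI nR; have [J [UGI cJ sIJ DJ noUnit]] := U_restrict_closure G cI.
have noEmpty : [::] \notin restrict G J by rewrite -UGI; apply/negP => /(U_refutable G cI).
by exists J; split => // l; split => [/DJ|]; last exact: unit_derivable_complete.
Qed.

(** * Search trees *)

Section SearchTrees.
Variable B : pred nat.
Implicit Type T : tree.

Lemma dmst_eqU G H T : U G = U H -> dmst B G T -> dmst B H T.
Proof.
move=> UGH D; case: G T / D UGH => [G cG|G x T1 T2 ncG Bx vx D1 D2] UGH.
  by apply: dmst_leaf; rewrite -UGH.
by apply: dmst_node; rewrite -?UGH.
Qed.

Lemma dmst_U G T : dmst B (U G) T <-> dmst B G T.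
Proof. by split; apply: dmst_eqU; rewrite U_idem. Qed.

Lemma dmst_conflict G T : [::] \in U G -> dmst B G T -> T = Leaf.
Proof. by move=> cG D; case: G T / D cG => // G x T1 T2 /negbTE ->. Qed.

Lemma dmst_leafP G I : consistent I -> dmst B (restrict G I) Leaf <-> unit_refutable G I.
Proof.
move=> cI; rewrite -U_refutable //.
split=> [D|]; last exact: dmst_leaf.
by inversion D.
Qed.

Lemma dmst_eq_derivable G I1 I2 T :
  consistent I1 -> consistent I2 ->
  (forall l, unit_derivable G I1 l <-> unit_derivable G I2 l) ->
  dmst B (restrict G I1) T -> dmst B (restrict G I2) T.
Proof.
move=> cI1 cI2 DI12.
have R12 : unit_refutable G I1 <-> unit_refutable G I2.
  by split; case=> c cG Dc; exists c => // l /Dc /DI12.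
case: (classic (unit_refutable G I1)) => [R1|nR1].
  move=> /(dmst_conflict (proj2 (U_refutable G cI1) R1)) ->.
  by apply/dmst_leafP/R12.
have nR2 : ~ unit_refutable G I2 by rewrite -R12.
have [J1 [UGI1 _ DJ1]] := U_restrict_derivable cI1 nR1.
have [J2 [UGI2 _ DJ2]] := U_restrict_derivable cI2 nR2.
apply: dmst_eqU; rewrite UGI1 UGI2; apply: eq_restrict => l.
by apply/idP/idP => [/DJ1/DI12/DJ2|/DJ2/DI12/DJ1].
Qed.

Lemma var_in_U_underivable G I x t : consistent I -> ~ unit_refutable G I ->
  var_in (U (restrict G I)) x -> ~ unit_derivable G I (x, t).
Proof.
move=> cI nR; have [J [-> _ DJ]] := U_restrict_derivable cI nR.
by move=> vx /DJ /(var_in_restrict_assigned G); rewrite vx.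
Qed.

Lemma dmst_restrict_U G I x t T :
  consistent I -> ~ unit_refutable G I -> (forall u, ~ unit_derivable G I (x, u)) ->
  dmst B (U (restrict (U (restrict G I)) [:: (x, t)])) T <->
  dmst B (restrict G (I ++ [:: (x, t)])) T.
Proof.
move=> cI nR nDx; have [J [-> cJ DJ]] := U_restrict_derivable cI nR.
have xJ u : (x, u) \notin J by apply/negP => /DJ /nDx.
rewrite restrict_cat => [|m]; last by rewrite inE => /eqP ->; apply: xJ.
have cIx : consistent (I ++ [:: (x, t)]).
  by apply: consistent_cat1 => //; apply/negP => /derivable_hyp /nDx.
have DJI l : unit_derivable G (J ++ [:: (x, t)]) l <-> unit_derivable G (I ++ [:: (x, t)]) l.
  split; apply: unit_derivable_trans => m; rewrite mem_cat inE => /orP[mK|/eqP ->].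
  - by apply: (unit_derivable_sub (I := I)); [move=> k; rewrite mem_cat => ->|apply/DJ].
  - by apply: derivable_hyp; rewrite mem_cat inE eqxx orbT.
  - by move/derivable_hyp/DJ: mK => mJ; apply: derivable_hyp; rewrite mem_cat mJ.
  - by apply: derivable_hyp; rewrite mem_cat inE eqxx orbT.
have cJx : consistent (J ++ [:: (x, t)]) by apply: consistent_cat1; rewrite ?xJ.
split => [/dmst_U|D]; first exact: dmst_eq_derivable.
by apply/dmst_U; apply: dmst_eq_derivable D => // l; apply: iff_sym.
Qed.

Lemma dmst_node_inv G x T1 T2 : dmst B G (Node x T1 T2) ->
  [/\ [::] \notin U G, B x, var_in (U G) x,
      dmst B (U (restrict (U G) [:: (x, false)])) T1 &
      dmst B (U (restrict (U G) [:: (x, true)])) T2].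
Proof. by move=> D; inversion D. Qed.

Lemma dmst_nodeP G I x T1 T2 : consistent I ->
  dmst B (restrict G I) (Node x T1 T2) <->
  [/\ ~ unit_refutable G I, B x, var_in (U (restrict G I)) x,
      dmst B (restrict G (I ++ [:: (x, false)])) T1 &
      dmst B (restrict G (I ++ [:: (x, true)])) T2].
Proof.
move=> cI; split => [/dmst_node_inv [ncG Bx vx D1 D2]|[nR Bx vx D1 D2]].
  have nR : ~ unit_refutable G I by move/(U_refutable G cI); apply/negP.
  have nDx u := var_in_U_underivable (t := u) cI nR vx.
  by split => //; apply/(dmst_restrict_U _ _ cI nR nDx).
have nDx u := var_in_U_underivable (t := u) cI nR vx.
apply: dmst_node => //; last 2 first.
- exact/(dmst_restrict_U _ _ cI nR nDx).
- exact/(dmst_restrict_U _ _ cI nR nDx).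
- by apply/negP => /(U_refutable G cI).
Qed.

Lemma dmst_restrict_derivable G I l T :
  consistent I -> consistent (I ++ [:: l]) -> unit_derivable G I l ->
  dmst B (restrict G (I ++ [:: l])) T -> dmst B (restrict G I) T.
Proof.
move=> cI cIl Dl; apply: dmst_eq_derivable => // m.
split; apply: unit_derivable_trans => k.
  by rewrite mem_cat inE => /orP[/derivable_hyp|/eqP ->].
by move=> kI; apply: derivable_hyp; rewrite mem_cat kI.
Qed.

(* If [y] is forced by propagation or no longer occurs, one of the two subtrees
   alone is a tree for [G|I]. *)
Lemma has_tree_split G I y k0 k1 : consistent I -> B y -> (forall t, (y, t) \notin I) ->
  has_tree_of_size B (restrict G (I ++ [:: (y, false)])) k0 ->
  has_tree_of_size B (restrict G (I ++ [:: (y, true)])) k1 ->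
  exists2 k, has_tree_of_size B (restrict G I) k & k <= (k0 + k1).+1.
Proof.
move=> cI By yI [T0 [D0 <-]] [T1 [D1 <-]].
have cIy t : consistent (I ++ [:: (y, t)]).
  by apply: consistent_cat1; rewrite ?yI.
case: (classic (unit_refutable G I)) => [R|nR].
  by exists 0 => //; exists Leaf; split => //; apply/dmst_leafP.
case: (boolP (var_in (U (restrict G I)) y)) => vy.
  exists (Defs.tsize (Node y T0 T1)) => //.
  by exists (Node y T0 T1); split => //; apply/dmst_nodeP.
case: (classic (exists t, unit_derivable G I (y, t))) => [[[] Dy]|nDy].
- exists (Defs.tsize T1); last by rewrite ltnW // ltnS leq_addl.
  by exists T1; split => //; apply: dmst_restrict_derivable D1.
- exists (Defs.tsize T0); last by rewrite ltnW // ltnS leq_addr.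
  by exists T0; split => //; apply: dmst_restrict_derivable D0.
have nDy' u : ~ unit_derivable G I (y, u) by move=> Du; apply: nDy; exists u.
exists (Defs.tsize T0); last by rewrite ltnW // ltnS leq_addr.
exists T0; split => //; move/(dmst_restrict_U _ _ cI nR nDy'): D0.
by rewrite restrict_novar // U_idem => /dmst_U.
Qed.

Lemma dmst_branch_vars (B' : pred nat) G T :
  (forall x, var_in G x -> B x -> B' x) -> dmst B G T -> dmst B' G T.
Proof.
move=> BB' D; elim: G T / D BB' => [G cG|G x T1 T2 ncG Bx vx _ IH1 _ IH2] BB'.
  exact: dmst_leaf.
have sub_vars t y : var_in (U (restrict (U G) [:: (x, t)])) y -> var_in G y.
  by move=> /var_in_U /var_in_restrict /var_in_U.
apply: dmst_node => //; first by apply: BB' (var_in_U vx) Bx.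
  by apply: IH1 => y /sub_vars; apply: BB'.
by apply: IH2 => y /sub_vars; apply: BB'.
Qed.

End SearchTrees.

(** * Minimal tree size *)

Lemma htos_bP B G k : htos_b B G k <-> has_tree_of_size B G k.
Proof. by rewrite /htos_b; case: excluded_middle_informative. Qed.

Lemma s_Some B G k : has_tree_of_size B G k ->
  exists m : nat, [/\ s B G = Some m, has_tree_of_size B G m &
                forall k', has_tree_of_size B G k' -> m <= k'].
Proof.
move=> tk; rewrite /s; case: excluded_middle_informative => [ex|]; last by case; exists k.
by case: ex_minnP => m /htos_bP tm min_m; exists m; split => // k' /htos_bP /min_m.
Qed.

Lemma s_None B G : ~ (exists k, has_tree_of_size B G k) -> s B G = None.
Proof. by move=> no_tree; rewrite /s; case: excluded_middle_informative. Qed.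

Lemma big_oadd_Some (I : finType) (o : I -> option nat) (k : I -> nat) :
  (forall i, o i = Some (k i)) -> \big[oadd/Some 0]_i o i = Some (\sum_i k i).
Proof. by move=> ok; apply: (big_rec2 (fun x y => x = Some y)) => // i _ y _ ->; rewrite ok. Qed.

Lemma big_oadd_None (I : finType) (o : I -> option nat) i0 :
  o i0 = None -> \big[oadd/Some 0]_i o i = None.
Proof.
move=> oi0; rewrite unlock; elim: (index_enum I) (mem_index_enum i0) => [|j r IH] //=.
by rewrite inE => /orP[/eqP <-|/IH ->]; [rewrite oi0|case: (o j)].
Qed.

Lemma s_sum_decomposition (I : finType) (B B' : pred nat) G (H : I -> cnf) (c : nat) :
  (forall k : I -> nat, (forall i, has_tree_of_size B' (H i) (k i)) ->
     has_tree_of_size B G (c + \sum_i k i)) ->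
  (forall N, has_tree_of_size B G N -> exists k : I -> nat,
     (forall i, has_tree_of_size B' (H i) (k i)) /\ c + \sum_i k i <= N) ->
  s B G = oadd (Some c) (\big[oadd/Some 0]_i s B' (H i)).
Proof.
move=> upper lower.
case: (classic (forall i, exists k, has_tree_of_size B' (H i) k)) => [trees|]; last first.
  case/not_all_ex_not => i0 no_tree; rewrite (big_oadd_None (i0 := i0)) ?s_None //.
  by case=> N /lower [k [tk _]]; apply: no_tree; exists (k i0).
pose m i := odflt 0 (s B' (H i)).
have s_m i : [/\ s B' (H i) = Some (m i), has_tree_of_size B' (H i) (m i) &
                 forall k, has_tree_of_size B' (H i) k -> m i <= k].
  by have [k /s_Some [mi [smi]]] := trees i; rewrite /m smi.
rewrite (big_oadd_Some (k := m)) => [|i]; last by case: (s_m i).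
have t_sum : has_tree_of_size B G (c + \sum_i m i) by apply: upper => i; case: (s_m i).
have [M [-> tM min_M]] := s_Some t_sum.
congr Some; apply/eqP; rewrite eqn_leq min_M //=.
have [k [tk kM]] := lower M tM; apply: leq_trans kM.
by rewrite leq_add2l; apply: leq_sum => i _; case: (s_m i) => _ _; apply.
Qed.

(** * Partial assignments to X *)

Section PartialAssignments.
Variable n : nat.
Implicit Types (p : {ffun 'I_n -> option bool}) (f : {ffun 'I_n -> bool}) (i : 'I_n).

Definition extends p f := [forall i, if p i is Some t then f i == t else true].

Definition unassigned p := #|[pred i | p i == None]|.

Definition assign_at p i t : {ffun 'I_n -> option bool} :=
  [ffun j => if j == i then Some t else p j].

Definition completion p : {ffun 'I_n -> bool} := [ffun i => odflt false (p i)].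

Lemma extends_assign_at p i t f :
  p i = None -> extends (assign_at p i t) f = extends p f && (f i == t).
Proof.
move=> pi; apply/forallP/andP => [ext_f|[/forallP ext_f fi] j].
  split; last by move: (ext_f i); rewrite ffunE eqxx.
  by apply/forallP => j; move: (ext_f j); rewrite ffunE; case: eqVneq => [->|]; rewrite ?pi.
by rewrite ffunE; case: eqVneq => [->|_] //; apply: ext_f.
Qed.

Lemma unassigned_assign_at p i t :
  p i = None -> unassigned p = (unassigned (assign_at p i t)).+1.
Proof.
move=> pi; rewrite /unassigned (cardD1 i) inE pi eqxx add1n; congr _.+1.
by apply: eq_card => j; rewrite !inE ffunE; case: eqVneq.
Qed.

Lemma unassigned_assign_at_pred p i (t : bool) (m : nat) :
  unassigned p = m.+1 -> p i = None -> unassigned (assign_at p i t) = m.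
Proof. by move=> pm pi; apply: succn_inj; rewrite -pm (unassigned_assign_at t pi). Qed.

Lemma sum_extends_split p i (k : {ffun 'I_n -> bool} -> nat) : p i = None ->
  \sum_(f | extends p f) k f =
  \sum_(f | extends (assign_at p i false) f) k f + \sum_(f | extends (assign_at p i true) f) k f.
Proof.
move=> pi; rewrite (bigID (fun f : {ffun 'I_n -> bool} => f i)) /= addnC.
congr addn; apply: eq_bigl => f; rewrite extends_assign_at //;
  by case: (f i); rewrite ?andbT ?andbF.
Qed.

Lemma unassigned_gt0 p : 0 < unassigned p -> exists i, p i = None.
Proof. by case/card_gt0P => i; rewrite inE => /eqP; exists i. Qed.

Lemma unassigned0_assigned p i : unassigned p = 0 -> p i != None.
Proof. by move=> p0; apply: contra_eqN p0 => pi; rewrite /unassigned (cardD1 i) inE pi. Qed.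

Lemma extends_completion p : extends p (completion p).
Proof. by apply/forallP => i; rewrite ffunE; case: (p i). Qed.

Lemma extends_total p f : unassigned p = 0 -> extends p f = (f == completion p).
Proof.
move=> p0; apply/idP/eqP => [/forallP ext_f|->]; last exact: extends_completion.
apply/ffunP => i; move: (ext_f i) (unassigned0_assigned i p0); rewrite ffunE.
by case: (p i) => // t /eqP.
Qed.

Lemma sum_extends_total p (k : {ffun 'I_n -> bool} -> nat) :
  unassigned p = 0 -> \sum_(f | extends p f) k f = k (completion p).
Proof. by move=> p0; apply: big_pred1 => f; rewrite extends_total. Qed.

Lemma card_extends p : \sum_(f | extends p f) 1 = 2 ^ unassigned p.
Proof.
move pm: (unassigned p) => m; elim: m p pm => [|m IH] p pm; first by rewrite sum_extends_total.
have [i pi] : exists i, p i = None by apply: unassigned_gt0; rewrite pm.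
by rewrite (sum_extends_split _ pi) !IH ?(unassigned_assign_at_pred _ pm pi) // expnS mul2n addnn.
Qed.

Lemma extends_unassigned f : extends [ffun=> None] f.
Proof. by apply/forallP => i; rewrite ffunE. Qed.

Lemma sum_extends_none (k : {ffun 'I_n -> bool} -> nat) :
  \sum_(f | extends [ffun=> None] f) k f = \sum_f k f.
Proof. by apply: eq_bigl => f; rewrite extends_unassigned. Qed.

Lemma unassigned_none : unassigned [ffun=> None] = n.
Proof. by rewrite -[RHS]card_ord; apply: eq_card => i; rewrite !inE ffunE. Qed.

End PartialAssignments.

(** * The formula c_X(F) *)

Section CompletionGadget.
Variables (n : nat) (xs vs : n.-tuple nat) (ys zs : seq nat) (F : cnf) (a b : nat).
Hypothesis xs_uniq : uniq xs.
Hypothesis xs_notin_ys : all (fun x => x \notin ys) xs.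
Hypothesis F_vars : forall x, var_in F x -> x \in xs ++ ys ++ zs.
Hypothesis fresh_uniq : uniq (a :: b :: vs).
Hypothesis fresh_new : all (fun v => v \notin xs ++ ys ++ zs) (a :: b :: vs).

Local Notation X i := (tnth xs i).
Local Notation V i := (tnth vs i).
Local Notation C := (cX xs vs a b F).
Local Notation fresh z := (z \in a :: b :: vs).
Local Notation old_lits I := {in I, forall l : literal, ~~ fresh l.1}.

Implicit Types (i : 'I_n) (f : {ffun 'I_n -> bool}) (Q : seq literal) (t : bool).

Lemma X_inj : injective (tnth xs).
Proof. exact/tuple_uniqP. Qed.

Lemma V_inj : injective (tnth vs).
Proof. by move: fresh_uniq => /= /and3P[_ _ /tuple_uniqP]. Qed.

Lemma fresh_V i : fresh (V i).
Proof. by rewrite !inE mem_tnth !orbT. Qed.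

Lemma fresh_notin z : fresh z -> z \notin xs ++ ys ++ zs.
Proof. by move/allP: fresh_new; apply. Qed.

Lemma X_not_fresh i : ~~ fresh (X i).
Proof. by apply: contraL (mem_tnth i xs) => /fresh_notin; rewrite mem_cat negb_or => /andP[]. Qed.

Lemma notin_ys x : x \in xs -> x \notin ys.
Proof. by move/allP: xs_notin_ys; apply. Qed.

Lemma X_notin_ys i : X i \notin ys.
Proof. exact/notin_ys/mem_tnth. Qed.

Lemma ys_not_fresh y : y \in ys -> ~~ fresh y.
Proof. by move=> yy; apply: contraL yy => /fresh_notin; rewrite !mem_cat !negb_or => /and3P[]. Qed.

Lemma F_not_fresh x : var_in F x -> ~~ fresh x.
Proof. by move=> /F_vars; apply: contraL => /fresh_notin. Qed.

Lemma a_neq_V i : a != V i.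
Proof.
move: fresh_uniq => /= /andP[+ _]; rewrite inE negb_or => /andP[_ avs].
by apply: contraNneq avs => ->; apply: mem_tnth.
Qed.

Lemma b_neq_V i : b != V i.
Proof.
by move: fresh_uniq => /= /and3P[_ bvs _]; apply: contraNneq bvs => ->; apply: mem_tnth.
Qed.

Lemma a_neq_b : a != b.
Proof. by move: fresh_uniq => /= /andP[+ _]; rewrite inE negb_or => /andP[]. Qed.

Variant cX_clause_spec (c : clause) : Prop :=
| CX_F g of g \in F & c = g ++ [:: (a, false); (b, false)]
| CX_X i t of c = [:: (X i, t); (V i, true)]
| CX_ab z of z \in [:: a; b] & c = rcons [seq (v, false) | v <- vs] (z, true).

Lemma zip_xs_vs : zip xs vs = [seq (X i, V i) | i <- enum 'I_n].
Proof. by rewrite -{1}(map_tnth_enum xs) -{1}(map_tnth_enum vs) zip_map. Qed.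

Lemma cX_clauseP c : c \in C -> cX_clause_spec c.
Proof.
rewrite /cX !mem_cat zip_xs_vs -!map_comp !inE.
case/or4P => [/mapP [g gF ->]|/mapP [i _ ->]|/mapP [i _ ->]|/orP[/eqP ->|/eqP ->]].
- exact: CX_F gF _.
- exact: CX_X.
- exact: CX_X.
- by apply: (CX_ab (z := a)); rewrite ?inE ?eqxx.
- by apply: (CX_ab (z := b)); rewrite ?inE ?eqxx ?orbT.
Qed.

Lemma mem_cX_F g : g \in F -> g ++ [:: (a, false); (b, false)] \in C.
Proof. by move=> gF; rewrite mem_cat (map_f _ gF). Qed.

Lemma mem_cX_X i t : [:: (X i, t); (V i, true)] \in C.
Proof.
rewrite /cX !mem_cat zip_xs_vs -!map_comp; apply/orP; right.
by case: t; apply/orP; [right; apply/orP; left|left]; apply/mapP; exists i; rewrite ?mem_enum.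
Qed.

Lemma mem_cX_ab z : z \in [:: a; b] -> rcons [seq (v, false) | v <- vs] (z, true) \in C.
Proof. by rewrite !inE => /orP[] /eqP ->; rewrite !mem_cat !inE eqxx !orbT. Qed.

Lemma mem_all_V_false l z : l \in rcons [seq (v, false) | v <- vs] (z, true) ->
  l = (z, true) \/ exists i, l = (V i, false).
Proof.
rewrite mem_rcons inE => /orP[/eqP ->|/mapP [v /tnthP [i ->] ->]]; first by left.
by right; exists i.
Qed.

Lemma restrict_cX J : consistent J -> (forall z, fresh z -> (z, true) \in J) ->
  restrict C J = restrict F J.
Proof.
move=> cJ freshJ.
have fresh_false z : fresh z -> neg_lit (z, false) \in J /\ (z, false) \notin J.
  by move=> /freshJ zJ; split => //; apply: contraTN zJ => /cJ.
rewrite /cX !restrict_cnf_cat restrict_catr_falsified => [|l]; last first.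
  by rewrite !inE => /orP[] /eqP ->; apply: fresh_false; rewrite !inE eqxx ?orbT.
have has_fresh_true c z : fresh z -> (z, true) \in c -> has (mem J) c.
  by move=> /freshJ zJ zc; apply/hasP; exists (z, true).
rewrite -[RHS]cats0; congr (_ ++ _).
rewrite zip_xs_vs -!map_comp !restrict_satisfied // => c.
- rewrite !inE => /orP[] /eqP ->; [apply: (has_fresh_true _ a)|apply: (has_fresh_true _ b)];
  by rewrite ?mem_rcons ?mem_head // !inE eqxx ?orbT.
- by case/mapP => i _ ->; apply: (has_fresh_true _ (V i)); rewrite ?fresh_V ?inE ?eqxx ?orbT.
- by case/mapP => i _ ->; apply: (has_fresh_true _ (V i)); rewrite ?fresh_V ?inE ?eqxx ?orbT.
Qed.

Lemma V_neq_X i j : V i != X j.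
Proof. by apply: contraNneq (X_not_fresh j) => <-; apply: fresh_V. Qed.

Lemma fresh_ab z : z \in [:: a; b] -> fresh z.
Proof. by rewrite !inE => /orP[] ->; rewrite ?orbT. Qed.

Lemma mem_assign_X f x t : reflect (exists2 i, x = X i & t = f i) ((x, t) \in assign_X xs f).
Proof.
by apply: (iffP imageP) => [[i _ [-> ->]]|[i -> ->]]; exists i.
Qed.

Lemma mem_assign_X_X f i t : ((X i, t) \in assign_X xs f) = (t == f i).
Proof.
by apply/mem_assign_X/eqP => [[j /X_inj ->]|->]; last exists i.
Qed.

Lemma derivable_cX_fresh f I z :
  {subset assign_X xs f <= I} -> fresh z -> unit_derivable C I (z, true).
Proof.
move=> fI; have DV i : unit_derivable C I (V i, true).
  apply: (derivable_unit (mem_cX_X i (~~ f i))); first by rewrite !inE eqxx orbT.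
  move=> m; rewrite !inE => /orP[/eqP -> _|/eqP -> /eqP //].
  by apply/derivable_hyp/fI; rewrite /neg_lit negbK mem_assign_X_X.
have Dab w : w \in [:: a; b] -> unit_derivable C I (w, true).
  move=> wab; apply: (derivable_unit (mem_cX_ab wab)); first by rewrite mem_rcons mem_head.
  by move=> m /mem_all_V_false [->|[j ->] _]; rewrite ?eqxx //; apply: DV.
by rewrite !inE => /or3P[/eqP ->|/eqP ->|/tnthP [i ->] //]; apply: Dab; rewrite !inE eqxx ?orbT.
Qed.

Lemma derivable_cX_of_F f I l :
  {subset assign_X xs f <= I} -> unit_derivable F I l -> unit_derivable C I l.
Proof.
move=> fI; apply: unit_derivable_min => [k /derivable_hyp //|g m gF mg IH].
apply: (derivable_unit (mem_cX_F gF)); first by rewrite mem_cat mg.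
move=> k; rewrite mem_cat => /orP[/IH //|]; rewrite !inE => /orP[] /eqP -> _;
  by apply: (derivable_cX_fresh fI); rewrite !inE eqxx ?orbT.
Qed.

Section TotalAssignment.
Variables (I : seq literal) (f : {ffun 'I_n -> bool}).
Hypothesis I_consistent : consistent I.
Hypothesis I_old : old_lits I.
Hypothesis I_assigns_X : {subset assign_X xs f <= I}.

Lemma derivable_F_not_fresh k : unit_derivable F I k -> ~~ fresh k.1.
Proof. by case/unit_derivable_var => [/I_old|/F_not_fresh]. Qed.

Lemma derivable_cX_old l : ~ unit_refutable F I -> unit_derivable C I l ->
  unit_derivable F I l \/ fresh l.1 /\ l.2.
Proof.
move=> nRF; have S_old k : ~~ fresh k.1 -> unit_derivable F I k \/ fresh k.1 /\ k.2 ->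
    unit_derivable F I k.
  by move=> kold [//|[kf]]; rewrite kf in kold.
have nF_old k g : g \in F -> k \in g -> ~~ fresh (neg_lit k).1.
  by move=> gF kg; apply: F_not_fresh; apply/hasP; exists g => //; apply/hasP; exists k.
move: l; apply: (unit_derivable_min (S := fun k => unit_derivable F I k \/ fresh k.1 /\ k.2)).
  by move=> k /derivable_hyp; left.
move=> c m /cX_clauseP [g gF ->|i t ->|z zab ->] mc IH.
- case: (boolP (m \in g)) => mg.
    left; apply: (derivable_unit gF mg) => k kg nkm; apply: S_old (nF_old _ _ gF kg) _.
    by apply: IH; rewrite ?mem_cat ?kg.
  exfalso; apply: nRF; exists g => // k kg; apply: S_old (nF_old _ _ gF kg) (IH _ _ _).
    by rewrite mem_cat kg.
  apply: contraNneq mg => <-; exact: kg.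
- rewrite !inE in mc; case/orP: mc => [/eqP em|/eqP ->]; last by right; rewrite /= fresh_V.
  have Vc : (V i, true) \in [:: (X i, t); (V i, true)] by rewrite !inE eqxx orbT.
  have Vm : (V i, true) != m by rewrite em xpair_eqE (negbTE (V_neq_X i i)).
  by case: (IH _ Vc Vm) => [/derivable_F_not_fresh|[_]] /=; rewrite ?fresh_V.
- case/mem_all_V_false: mc => [->|[j em]]; first by right; rewrite /= fresh_ab.
  have zc : (z, true) \in rcons [seq (v, false) | v <- vs] (z, true).
    by rewrite mem_rcons mem_head.
  have zm : (z, true) != m by rewrite em xpair_eqE andbF.
  by case: (IH _ zc zm) => [/derivable_F_not_fresh|[_]] /=; rewrite ?(fresh_ab zab).
Qed.

Lemma refutable_cX : unit_refutable C I <-> unit_refutable F I.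
Proof.
split => [RC|[g gF Dg]]; last first.
  exists (g ++ [:: (a, false); (b, false)]); first exact: mem_cX_F.
  move=> l; rewrite mem_cat => /orP[/Dg/(derivable_cX_of_F I_assigns_X) //|].
  rewrite !inE => /orP[] /eqP ->; apply: (derivable_cX_fresh I_assigns_X);
  by rewrite !inE eqxx ?orbT.
apply: NNPP => nRF; case: RC => c /cX_clauseP [g gF ->|i t ->|z zab ->] Dc.
- apply: (nRF); exists g => // l lg; have := derivable_cX_old nRF (Dc l _).
  rewrite mem_cat lg => /(_ isT) [//|[lf _]]; suff : ~~ fresh (neg_lit l).1 by rewrite lf.
  by apply: F_not_fresh; apply/hasP; exists g => //; apply/hasP; exists l.
- have := derivable_cX_old nRF (Dc (V i, true) _); rewrite !inE eqxx orbT.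
  by case/(_ isT) => [/derivable_F_not_fresh|[_]] /=; rewrite ?fresh_V.
- have := derivable_cX_old nRF (Dc (z, true) _); rewrite mem_rcons mem_head.
  by case/(_ isT) => [/derivable_F_not_fresh|[_]] /=; rewrite ?(fresh_ab zab).
Qed.

Lemma U_cX_restrict : ~ unit_refutable F I -> U (restrict C I) = U (restrict F I).
Proof.
move=> nRF; have nRC : ~ unit_refutable C I by rewrite refutable_cX.
have [JC [-> cJC DJC]] := U_restrict_derivable I_consistent nRC.
have [JF [-> _ DJF]] := U_restrict_derivable I_consistent nRF.
rewrite restrict_cX // => [|z zf]; last exact/DJC/(derivable_cX_fresh I_assigns_X).
apply: eq_restrict_on => l vl; apply/idP/idP => [/DJC /(derivable_cX_old nRF)|/DJF].
  by case=> [/DJF //|[]]; rewrite (negbTE (F_not_fresh vl)).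
by move/(derivable_cX_of_F I_assigns_X)/DJC.
Qed.

End TotalAssignment.

Definition Y_assignment Q := consistent Q /\ {in Q, forall l : literal, l.1 \in ys}.

Lemma consistent_cat_Y I Q : consistent I -> {in I, forall l : literal, l.1 \in xs} ->
  Y_assignment Q -> consistent (I ++ Q).
Proof.
move=> cI Ix [cQ Qy] l; rewrite !mem_cat negb_or => /orP[lI|lQ]; apply/andP; split.
- exact: cI.
- by apply: contra (notin_ys (Ix _ lI)) => /Qy.
- by apply: contraL (Qy _ lQ) => /Ix /notin_ys.
- exact: cQ.
Qed.

Lemma consistent_assign_X f Q : Y_assignment Q -> consistent (assign_X xs f ++ Q).
Proof.
apply: consistent_cat_Y => [[x t] /mem_assign_X [i -> ->]|[x t] /mem_assign_X [i -> _]].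
  by rewrite /neg_lit /= mem_assign_X_X; case: (f i).
exact: mem_tnth.
Qed.

Lemma assign_X_old f Q : Y_assignment Q -> old_lits (assign_X xs f ++ Q).
Proof.
case=> _ Qy [x t]; rewrite mem_cat => /orP[/mem_assign_X [i -> _]|/Qy]; first exact: X_not_fresh.
exact: ys_not_fresh.
Qed.

Lemma dmst_cX_total f Q T : Y_assignment Q ->
  dmst (mem (xs ++ ys)) (restrict C (assign_X xs f ++ Q)) T <->
  dmst (mem ys) (restrict F (assign_X xs f ++ Q)) T.
Proof.
move=> YQ; have cI := consistent_assign_X (f := f) YQ; have oldI := assign_X_old (f := f) YQ.
have XI : {subset assign_X xs f <= assign_X xs f ++ Q} by move=> l; rewrite mem_cat => ->.
case: (classic (unit_refutable F (assign_X xs f ++ Q))) => [RF|nRF].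
  have RC := proj2 (refutable_cX oldI XI) RF.
  by split => [/(dmst_conflict (proj2 (U_refutable _ cI) RC))|
               /(dmst_conflict (proj2 (U_refutable _ cI) RF))] ->; apply/dmst_leafP.
have UCF := U_cX_restrict cI oldI XI nRF.
split => [/(dmst_eqU UCF)|D]; last first.
  apply: (dmst_eqU (esym UCF)); apply: dmst_branch_vars D => x _ xy.
  by rewrite inE mem_cat (xy : x \in ys) orbT.
apply: dmst_branch_vars => x vx; rewrite inE mem_cat => /orP[/tnthP [i xi]|//].
have Xf : (x, f i) \in assign_X xs f ++ Q by rewrite xi mem_cat mem_assign_X_X eqxx.
by move: (var_in_restrict_assigned F Xf); rewrite vx.
Qed.

Implicit Type p : {ffun 'I_n -> option bool}.

Definition assign_Xp p : seq literal :=
  [seq (X i, odflt false (p i)) | i <- enum 'I_n & p i != None].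

Lemma mem_assign_Xp p x t :
  reflect (exists2 i, p i = Some t & x = X i) ((x, t) \in assign_Xp p).
Proof.
apply: (iffP mapP) => [[i]|[i pi ->]]; last by exists i; rewrite ?pi // mem_filter mem_enum pi.
by rewrite mem_filter => /andP[pi _] [-> ->]; exists i => //; case: (p i) pi.
Qed.

Lemma mem_assign_Xp_X p i t : ((X i, t) \in assign_Xp p) = (p i == Some t).
Proof. by apply/mem_assign_Xp/eqP => [[j pj /X_inj ->]|]; last exists i. Qed.

Lemma consistent_assign_Xp p Q : Y_assignment Q -> consistent (assign_Xp p ++ Q).
Proof.
apply: consistent_cat_Y => [[x t] /mem_assign_Xp [i pi ->]|[x t] /mem_assign_Xp [i _ ->]].
  by rewrite /neg_lit /= mem_assign_Xp_X pi; case: t pi.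
exact: mem_tnth.
Qed.

(* An upper bound for the literals derived in [cX] while some [x_i0] is open:
   [v_i0], and hence [a] and [b], are never derived. *)
Definition partial_closure p Q (l : literal) :=
  l \in assign_Xp p ++ Q \/ exists2 i, l = (V i, true) & p i != None.

Section PartialAssignment.
Variables (p : {ffun 'I_n -> option bool}) (Q : seq literal) (i0 : 'I_n).
Hypothesis Q_Y : Y_assignment Q.
Hypothesis p_partial : p i0 = None.

Lemma partial_closure_X i t : partial_closure p Q (X i, t) -> p i = Some t.
Proof.
case=> [|[j [/eqP/negPn]]]; last by rewrite eq_sym (negbTE (V_neq_X _ _)).
rewrite mem_cat mem_assign_Xp_X => /orP[/eqP //|/(proj2 Q_Y) /=].
by rewrite (negbTE (X_notin_ys i)).
Qed.

Lemma partial_closure_fresh z t : fresh z -> partial_closure p Q (z, t) ->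
  exists2 i, z = V i & t && (p i != None).
Proof.
move=> zf [|[i [-> ->] pi]]; last by exists i.
rewrite mem_cat => /orP[/mem_assign_Xp [i _ zi]|/(proj2 Q_Y) /= /ys_not_fresh].
  by move: zf; rewrite zi (negbTE (X_not_fresh i)).
by rewrite zf.
Qed.

Lemma partial_closure_ab z t : z \in [:: a; b] -> ~ partial_closure p Q (z, t).
Proof.
move=> zab /(partial_closure_fresh (fresh_ab zab)) [i zi _]; move: zab.
by rewrite !inE zi !(eq_sym (V i)) (negbTE (a_neq_V i)) (negbTE (b_neq_V i)).
Qed.

Lemma partial_closure_V_false i : ~ partial_closure p Q (V i, false).
Proof. by case/(partial_closure_fresh (fresh_V i)). Qed.

Lemma derivable_cX_partial l :
  unit_derivable C (assign_Xp p ++ Q) l -> partial_closure p Q l.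
Proof.
move: l; apply: unit_derivable_min => [l lI|c m]; first by left.
case/cX_clauseP => [g gF ->|i t ->|z zab ->] mc IH.
- have [w [wc wm wab]] : exists w, [/\ (w, false) \in g ++ [:: (a, false); (b, false)],
                                       (w, false) != m & w \in [:: a; b]].
    case: (eqVneq m (a, false)) => [->|nma]; [exists b|exists a]; split;
      rewrite ?mem_cat ?inE ?eqxx ?orbT // 1?eq_sym //.
    by rewrite xpair_eqE andbT a_neq_b.
  by case: (partial_closure_ab wab (IH _ wc wm)).
- rewrite !inE in mc; case/orP: mc => /eqP em.
    have Vc : (V i, true) \in [:: (X i, t); (V i, true)] by rewrite !inE eqxx orbT.
    have Vm : (V i, true) != m by rewrite em xpair_eqE (negbTE (V_neq_X _ _)).
    by case: (partial_closure_V_false (IH _ Vc Vm)).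
  have Xc : (X i, t) \in [:: (X i, t); (V i, true)] by rewrite !inE eqxx.
  have Xm : (X i, t) != m by rewrite em xpair_eqE eq_sym (negbTE (V_neq_X _ _)).
  by right; exists i; rewrite // (partial_closure_X (IH _ Xc Xm)).
- case/mem_all_V_false: mc => [em|[j em]].
    have Vc : (V i0, false) \in rcons [seq (v, false) | v <- vs] (z, true).
      by rewrite mem_rcons inE; apply/orP; right; apply/mapP; exists (V i0); rewrite ?mem_tnth.
    have Vm : (V i0, false) != m by rewrite em xpair_eqE andbF.
    by case/(partial_closure_fresh (fresh_V i0)): (IH _ Vc Vm) => j /V_inj <-; rewrite p_partial.
  have zc : (z, true) \in rcons [seq (v, false) | v <- vs] (z, true) by rewrite mem_rcons mem_head.
  have zm : (z, true) != m by rewrite em xpair_eqE andbF.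
  by case: (partial_closure_ab zab (IH _ zc zm)).
Qed.

Lemma not_refutable_cX_partial : ~ unit_refutable C (assign_Xp p ++ Q).
Proof.
case=> c /cX_clauseP [g gF ->|i t ->|z zab ->] D.
- move: (D (a, false)); rewrite mem_cat !inE eqxx orbT => /(_ isT) /derivable_cX_partial.
  by apply: partial_closure_ab; rewrite inE eqxx.
- move: (D (V i, true)); rewrite !inE eqxx orbT => /(_ isT) /derivable_cX_partial.
  exact: partial_closure_V_false.
- move: (D (z, true)); rewrite mem_rcons mem_head => /(_ isT) /derivable_cX_partial.
  exact: partial_closure_ab.
Qed.

Lemma var_in_cX_partial : var_in (U (restrict C (assign_Xp p ++ Q))) (X i0).
Proof.
have cI := consistent_assign_Xp (p := p) Q_Y.
have [J [-> _ DJ]] := U_restrict_derivable cI not_refutable_cX_partial.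
have XJ t : (X i0, t) \notin J.
  by apply/negP => /DJ /derivable_cX_partial /partial_closure_X; rewrite p_partial.
apply/var_in_restrictP; exists [:: (X i0, false); (V i0, true)]; first exact: mem_cX_X.
split; last by exists (X i0, false); rewrite ?inE ?eqxx //; split; last exact: XJ.
apply/hasP => [[l]]; rewrite !inE => /orP[] /eqP ->; first by rewrite (negbTE (XJ _)).
move/DJ/derivable_cX_partial/(partial_closure_fresh (fresh_V i0)) => [j /V_inj <-].
by rewrite p_partial.
Qed.

End PartialAssignment.

Lemma Y_assignment_nil : Y_assignment [::].
Proof. by []. Qed.

Lemma assign_Xp_total p Q :
  unassigned p = 0 -> assign_Xp p ++ Q =i assign_X xs (completion p) ++ Q.
Proof.
move=> p0 [x t]; rewrite !mem_cat; congr (_ || _).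
apply/mem_assign_Xp/mem_assign_X => [[i pi ->]|[i -> ->]].
  by exists i; rewrite // ffunE pi.
by exists i => //; rewrite ffunE; case: (p i) (unassigned0_assigned i p0).
Qed.

Lemma assign_Xp_assign_at p Q i t : p i = None ->
  (assign_Xp p ++ Q) ++ [:: (X i, t)] =i assign_Xp (assign_at p i t) ++ Q.
Proof.
move=> pi [x u]; rewrite !mem_cat inE orbAC; congr (_ || _); apply/orP/mem_assign_Xp.
  case=> [/mem_assign_Xp [j pj ->]|/eqP [-> ->]]; last by exists i; rewrite // ffunE eqxx.
  by exists j => //; rewrite ffunE; case: eqVneq => // ji; rewrite ji pi in pj.
case=> j; rewrite ffunE; case: eqVneq => [-> [<-] ->|_ pj ->]; first by right.
by left; apply/mem_assign_Xp; exists j.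
Qed.

Lemma assign_Xp_none : assign_Xp [ffun=> None] = [::].
Proof. by rewrite /assign_Xp (@eq_filter _ _ pred0) ?filter_pred0 // => i; rewrite ffunE. Qed.

Lemma has_tree_cX_partial p (k : {ffun 'I_n -> bool} -> nat) :
  (forall f, extends p f -> has_tree_of_size (mem ys) (restrict F (assign_X xs f)) (k f)) ->
  has_tree_of_size (mem (xs ++ ys)) (restrict C (assign_Xp p))
    (2 ^ unassigned p - 1 + \sum_(f | extends p f) k f).
Proof.
move pm: (unassigned p) => m; elim: m p pm => [|m IH] p pm trees.
  rewrite sum_extends_total // expn0 subnn add0n.
  have [T [D sT]] := trees _ (extends_completion p).
  exists T; split => //; rewrite -[assign_Xp p]cats0 (eq_restrict _ (assign_Xp_total _ pm)).
  by apply/(dmst_cX_total _ _ Y_assignment_nil); rewrite cats0.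
have [i pi] : exists i, p i = None by apply: unassigned_gt0; rewrite pm.
have trees_at t f : extends (assign_at p i t) f ->
    has_tree_of_size (mem ys) (restrict F (assign_X xs f)) (k f).
  by rewrite extends_assign_at // => /andP[/trees].
have [T0 [D0 s0]] := IH _ (unassigned_assign_at_pred false pm pi) (trees_at false).
have [T1 [D1 s1]] := IH _ (unassigned_assign_at_pred true pm pi) (trees_at true).
exists (Node (X i) T0 T1); split; last first.
  rewrite /= s0 s1 (sum_extends_split _ pi) expnS; have := expn_gt0 2 m; lia.
rewrite -[assign_Xp p]cats0.
apply/dmst_nodeP; first exact: consistent_assign_Xp.
split.
- exact: (not_refutable_cX_partial Y_assignment_nil pi).
- by rewrite inE mem_cat mem_tnth.
- exact: (var_in_cX_partial Y_assignment_nil pi).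
- by rewrite (eq_restrict _ (assign_Xp_assign_at _ _ pi)) cats0.
- by rewrite (eq_restrict _ (assign_Xp_assign_at _ _ pi)) cats0.
Qed.

Definition F_trees_bounded p Q N := exists k : {ffun 'I_n -> bool} -> nat,
  (forall f, extends p f -> has_tree_of_size (mem ys) (restrict F (assign_X xs f ++ Q)) (k f)) /\
  2 ^ unassigned p - 1 + \sum_(f | extends p f) k f <= N.

Lemma F_trees_total p Q T : Y_assignment Q -> unassigned p = 0 ->
  dmst (mem (xs ++ ys)) (restrict C (assign_Xp p ++ Q)) T -> F_trees_bounded p Q (Defs.tsize T).
Proof.
move=> YQ p0 D; exists (fun=> Defs.tsize T); split; last by rewrite sum_extends_total // p0.
move=> f; rewrite extends_total // => /eqP ->; exists T; split => //.
by apply/(dmst_cX_total _ _ YQ); rewrite -(eq_restrict _ (assign_Xp_total _ p0)).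
Qed.

Lemma F_trees_branch_X p Q i N0 N1 : p i = None ->
  F_trees_bounded (assign_at p i false) Q N0 -> F_trees_bounded (assign_at p i true) Q N1 ->
  F_trees_bounded p Q (N0 + N1).+1.
Proof.
move=> pi [k0 [t0 s0]] [k1 [t1 s1]]; exists (fun f => if f i then k1 f else k0 f); split.
  by move=> f ext_f; case fi: (f i); [apply: t1|apply: t0]; rewrite extends_assign_at // ext_f fi.
have sum_at t : \sum_(f | extends (assign_at p i t) f) (if f i then k1 f else k0 f) =
                \sum_(f | extends (assign_at p i t) f) (if t then k1 f else k0 f).
  by apply: eq_bigr => f; rewrite extends_assign_at //; case/andP => _ /eqP ->.
rewrite (sum_extends_split _ pi) !sum_at /=.
have [m pm] : exists m : nat, unassigned p = m.+1.
  by exists (unassigned (assign_at p i true)); apply: unassigned_assign_at.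
move: s0 s1; rewrite pm !(unassigned_assign_at_pred _ pm pi) expnS.
have : 0 < 2 ^ m by rewrite expn_gt0.
move: (2 ^ m) (\sum_(f | extends (assign_at p i false) f) k0 f) => E S0.
move: (\sum_(f | extends (assign_at p i true) f) k1 f) => S1; lia.
Qed.

Lemma F_trees_branch_Y p Q y N0 N1 :
  Y_assignment Q -> y \in ys -> (forall t, (y, t) \notin Q) ->
  F_trees_bounded p (Q ++ [:: (y, false)]) N0 -> F_trees_bounded p (Q ++ [:: (y, true)]) N1 ->
  F_trees_bounded p Q (N0 + N1).+1.
Proof.
move=> YQ yy yQ [k0 [t0 s0]] [k1 [t1 s1]].
have split_f f : exists k, extends p f ->
    has_tree_of_size (mem ys) (restrict F (assign_X xs f ++ Q)) k /\ k <= (k0 f + k1 f).+1.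
  have [ext_f|] := boolP (extends p f); last by exists 0.
  have yI t : (y, t) \notin assign_X xs f ++ Q.
    rewrite mem_cat (negbTE (yQ t)) orbF; apply/mem_assign_X => [[i yi _]].
    by move: yy; rewrite yi (negbTE (X_notin_ys i)).
  have tf t : has_tree_of_size (mem ys) (restrict F ((assign_X xs f ++ Q) ++ [:: (y, t)]))
                (if t then k1 f else k0 f).
    by rewrite -catA; case: t; [apply: t1|apply: t0].
  have [k tk kle] := has_tree_split (consistent_assign_X (f := f) YQ) yy yI (tf false) (tf true).
  by exists k.
have [k tk] := choice _ split_f; exists k; split; first by move=> f /tk [].
have : \sum_(f | extends p f) k f <= \sum_(f | extends p f) (k0 f + k1 f + 1).
  by apply: leq_sum => f /tk [_]; rewrite addn1.
rewrite !big_split /= card_extends; move: s0 s1.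
move: (2 ^ unassigned p) (\sum_(f | extends p f) k f) => E S.
move: (\sum_(f | extends p f) k0 f) (\sum_(f | extends p f) k1 f) => S0 S1; lia.
Qed.

Lemma Y_assignment_cat1 Q y t : Y_assignment Q -> y \in ys -> (forall u, (y, u) \notin Q) ->
  Y_assignment (Q ++ [:: (y, t)]).
Proof.
case=> cQ Qy yy yQ; split; first by apply: consistent_cat1; rewrite ?yQ.
by move=> l; rewrite mem_cat inE => /orP[/Qy|/eqP ->].
Qed.

Lemma F_trees_of_dmst p Q T : Y_assignment Q ->
  dmst (mem (xs ++ ys)) (restrict C (assign_Xp p ++ Q)) T -> F_trees_bounded p Q (Defs.tsize T).
Proof.
elim: T p Q => [|x T0 IH0 T1 IH1] p Q YQ D; have cI := consistent_assign_Xp (p := p) YQ.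
  case: (posnP (unassigned p)) => [p0|/unassigned_gt0 [i0 pi0]].
    exact: F_trees_total.
  by case: (not_refutable_cX_partial YQ pi0 (proj1 (dmst_leafP _ _ cI) D)).
case/(dmst_nodeP _ _ _ _ _ cI): D => nR Bx vx D0 D1.
have nDx t : ~ unit_derivable C (assign_Xp p ++ Q) (x, t) := var_in_U_underivable cI nR vx.
move: Bx; rewrite inE mem_cat => /orP[/tnthP [i xi]|xy].
  have pi : p i = None.
    case E: (p i) => [t|] //; case: (nDx t); apply: derivable_hyp.
    by rewrite mem_cat xi mem_assign_Xp_X E eqxx.
  rewrite {}xi in D0 D1; apply: (F_trees_branch_X pi); [apply: IH0|apply: IH1] => //;
    by rewrite -(eq_restrict _ (assign_Xp_assign_at _ _ pi)).
have xQ u : (x, u) \notin Q.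
  by apply/negP => xQ; apply: (nDx u); apply: derivable_hyp; rewrite mem_cat xQ orbT.
apply: (F_trees_branch_Y YQ xy xQ); [apply: IH0|apply: IH1]; rewrite ?catA //;
  exact: Y_assignment_cat1.
Qed.

Lemma has_tree_cX (k : {ffun 'I_n -> bool} -> nat) :
  (forall f, has_tree_of_size (mem ys) (restrict F (assign_X xs f)) (k f)) ->
  has_tree_of_size (mem (xs ++ ys)) C (2 ^ n - 1 + \sum_f k f).
Proof.
move=> trees; have := @has_tree_cX_partial [ffun=> None] k (fun f _ => trees f).
by rewrite assign_Xp_none restrict_nil unassigned_none sum_extends_none.
Qed.

Lemma F_trees_of_cX N : has_tree_of_size (mem (xs ++ ys)) C N ->
  exists k : {ffun 'I_n -> bool} -> nat,
    (forall f, has_tree_of_size (mem ys) (restrict F (assign_X xs f)) (k f)) /\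
    2 ^ n - 1 + \sum_f k f <= N.
Proof.
case=> T [D <-].
have D' : dmst (mem (xs ++ ys)) (restrict C (assign_Xp [ffun=> None] ++ [::])) T.
  by rewrite assign_Xp_none restrict_nil.
have [k [tk sk]] := F_trees_of_dmst Y_assignment_nil D'.
exists k; split; last by move: sk; rewrite unassigned_none sum_extends_none.
by move=> f; rewrite -[assign_X _ _]cats0; apply: tk; apply: extends_unassigned.
Qed.

End CompletionGadget.

Theorem corollary3 (n : nat) (xs : n.-tuple nat) (ys zs : seq nat)
  (F : cnf) (vs : n.-tuple nat) (a b : nat) :
  (* X = {x_1..x_n} distinct; X, Y, Z pairwise disjoint *)
  uniq xs ->
  all (fun x => x \notin ys) xs -> all (fun x => x \notin zs) xs ->
  all (fun y => y \notin zs) ys ->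
  (* F is a formula over X u Y u Z *)
  (forall x, var_in F x -> x \in xs ++ ys ++ zs) ->
  (* unit propagation determines Z from every assignment to X u Y *)
  (forall f : nat -> bool,
     let G := U (restrict F (assign_on (xs ++ ys) f)) in
     [::] \in G \/ (forall z, z \in zs -> ~~ var_in G z)) ->
  (* a, b, v_1..v_n are new, pairwise distinct variables *)
  uniq (a :: b :: vs) ->
  all (fun v => v \notin xs ++ ys ++ zs) (a :: b :: vs) ->
  s (mem (xs ++ ys)) (cX xs vs a b F)
  = oadd (Some (2 ^ n - 1))
      (\big[oadd/Some 0]_(f : {ffun 'I_n -> bool})
          s (mem ys) (restrict F (assign_X xs f))).
Proof.
move=> xs_uniq xs_notin_ys _ _ F_vars _ fresh_uniq fresh_new.
apply: s_sum_decomposition => [k trees|N tN].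
  exact: (has_tree_cX xs_uniq xs_notin_ys F_vars fresh_uniq fresh_new trees).
exact: (F_trees_of_cX xs_uniq xs_notin_ys F_vars fresh_uniq fresh_new tN).
Qed.
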